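(* Let $f:\mathbb{R}^d\to\mathbb{R}$ be convex and differentiable with $L$-Lipschitz gradient, with $X^*\neq\emptyset$, and suppose $f(x)-f^*\ge\mu\,\mathrm{dist}(x,X^* )^p$ for all $x$, for some $\mu>0$ and $p\ge2$. Run the Proximal Bundle Method with $\beta\in(0,1)$ and constant stepsize $\rho_k=\rho>0$. Write $\Delta_0=f(x_0)-f^*$. Then for any $0<\epsilon\le\Delta_0$, the number of descent steps taken before an $\epsilon$-minimizer is found is at most $$N:=\begin{cases}\dfrac{2\rho}{(1-2/p)\beta\mu^{2/p}\epsilon^{1-2/p}}+\left\lceil\dfrac{2\log\left(\Delta_0/(\rho/\mu^{2/p})^{1/(1-2/p)}\right)}{\beta}\right\rceil_+ & p>2,\\[2mm] \left\lceil\dfrac{2\log(\Delta_0/\epsilon)}{\beta\min\{\mu/\rho,1\}}\right\rceil & p=2,\end{cases}$$ and the number of null steps taken before then is at most $\dfrac{16(L+\rho)^3}{(1-\beta)^2\rho^3}(N+1)$ if $p>2$ and $\dfrac{16(L+\rho)^3}{(1-\beta)^2\rho^3}N$ if $p=2$.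
   Context: Throughout, $f:\mathbb{R}^d\to\mathbb{R}$ is a proper closed convex function attaining its minimum $f^*=\inf f$ on the nonempty set $X^*=\{x: f(x)=f^*\}$; $\mathrm{dist}(x,S)=\inf_{y\in S}\|x-y\|$; $\partial f(x)$ is the convex subdifferential; $\lceil a\rceil_+=\max\{\lceil a\rceil,0\}$. A subgradient oracle returns, for any $x$, the value $f(x)$ and some $g(x)\in\partial f(x)$. Proximal Bundle Method: fix $\beta\in(0,1)$, $x_0=z_0\in\mathbb{R}^d$, $g_0=g(x_0)$, and the initial model $f_0(x)=f(x_0)+\langle g_0,x-x_0\rangle$. At iteration $k\ge0$, given a convex model $f_k:\mathbb{R}^d\to\mathbb{R}$ and stepsize $\rho_k>0$, compute $z_{k+1}=\operatorname{argmin}_z f_k(z)+\frac{\rho_k}{2}\|z-x_k\|^2$. If $\beta(f(x_k)-f_k(z_{k+1}))\le f(x_k)-f(z_{k+1})$, iteration $k$ is a descent step and $x_{k+1}=z_{k+1}$; otherwise it is a null step and $x_{k+1}=x_k$. Then a new convex model $f_{k+1}$ and stepsize $\rho_{k+1}$ are chosen satisfying, with $g_{k+1}=g(z_{k+1})$ and $s_{k+1}=\rho_k(x_k-z_{k+1})$: (1) $f_{k+1}(x)\le f(x)$ for all $x$; (2) $f_{k+1}(x)\ge f(z_{k+1})+\langle g_{k+1},x-z_{k+1}\rangle$ for all $x$; (3) if iteration $k$ was a null step, $f_{k+1}(x)\ge f_k(z_{k+1})+\langle s_{k+1},x-z_{k+1}\rangle$ for all $x$; (4) if iteration $k$ was a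 null step, $\rho_{k+1}\ge\rho_k$. An $\epsilon$-minimizer is a point $x$ with $f(x)-f^*\le\epsilon$. *)

From HB Require Import structures.
From mathcomp Require Import all_boot all_order all_algebra.
From mathcomp Require Import all_classical all_reals exp.
Set Implicit Arguments. Unset Strict Implicit. Unset Printing Implicit Defensive.
Import Order.TTheory GRing.Theory Num.Theory.
Local Open Scope ring_scope.
Local Open Scope classical_set_scope.

Section Defs.
Variables (R : realType) (d : nat).
Notation vec := 'rV[R]_d.

Definition dot (u v : vec) : R := \sum_(i < d) u ord0 i * v ord0 i.
Definition enorm (u : vec) : R := Num.sqrt (dot u u).

Definition dist (x : vec) (S : set vec) : R := inf [set enorm (x - y) | y in S].

Definition convex_fun (f : vec -> R) : Prop :=
  forall (x y : vec) (t : R), 0 <= t <= 1 ->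
    f (t *: x + (1 - t) *: y) <= t * f x + (1 - t) * f y.

Definition is_subgradient (f : vec -> R) (x g : vec) : Prop :=
  forall y, f x + dot g (y - x) <= f y.

Definition has_gradient (f : vec -> R) (gradf : vec -> vec) : Prop :=
  forall x (eps : R), 0 < eps -> exists2 delta : R, 0 < delta &
    forall h, enorm h < delta ->
      `| f (x + h) - f x - dot (gradf x) h | <= eps * enorm h.

Definition smooth_with (f : vec -> R) (L : R) : Prop :=
  exists gradf : vec -> vec, has_gradient f gradf /\
    forall x y, enorm (gradf x - gradf y) <= L * enorm (x - y).

Definition is_min_value (f : vec -> R) (fstar : R) : Prop :=
  (forall x, fstar <= f x) /\ exists x, f x = fstar.

Definition descent_step (beta : R) (f : vec -> R) (fk : vec -> R)
    (xk zk1 : vec) : bool :=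
  beta * (f xk - fk zk1) <= f xk - f zk1.

Definition PBM_run (f : vec -> R) (g : vec -> vec) (beta rho : R)
    (x z : nat -> vec) (fmod : nat -> vec -> R) : Prop :=
  [/\ z 0%N = x 0%N /\
      fmod 0%N = (fun y => f (x 0%N) + dot (g (x 0%N)) (y - x 0%N)),
      (forall k, convex_fun (fmod k)),
      (forall k y, fmod k (z k.+1) + rho / 2 * enorm (z k.+1 - x k) ^+ 2
                   <= fmod k y + rho / 2 * enorm (y - x k) ^+ 2),
      (forall k, x k.+1 = if descent_step beta f (fmod k) (x k) (z k.+1)
                          then z k.+1 else x k) &
      (forall k,
        [/\ (forall y, fmod k.+1 y <= f y),
            (forall y, f (z k.+1) + dot (g (z k.+1)) (y - z k.+1) <= fmod k.+1 y) &
            (~~ descent_step beta f (fmod k) (x k) (z k.+1) ->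
               forall y, fmod k (z k.+1) + dot (rho *: (x k - z k.+1)) (y - z k.+1)
                         <= fmod k.+1 y)])].

Definition n_descent (beta : R) (f : vec -> R) (x z : nat -> vec)
    (fmod : nat -> vec -> R) (K : nat) : nat :=
  count (fun k => descent_step beta f (fmod k) (x k) (z k.+1)) (iota 0 K).
Definition n_null (beta : R) (f : vec -> R) (x z : nat -> vec)
    (fmod : nat -> vec -> R) (K : nat) : nat :=
  count (fun k => ~~ descent_step beta f (fmod k) (x k) (z k.+1)) (iota 0 K).

End Defs.

Definition ceil_plus (R : realType) (a : R) : R := (Num.max (Num.ceil a) 0%R)%:~R.

Definition N_bound (R : realType) (p mu rho beta eps Delta0 : R) : R :=
  if 2 < p then
    2 * rho / ((1 - 2 / p) * beta * powR mu (2 / p) * powR eps (1 - 2 / p))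
    + ceil_plus (2 * ln (Delta0 / powR (rho / powR mu (2 / p)) (1 / (1 - 2 / p))) / beta)
  else
    (Num.ceil (2 * ln (Delta0 / eps) / (beta * Num.min (mu / rho) 1)))%:~R.

Definition null_bound (R : realType) (p L mu rho beta eps Delta0 : R) : R :=
  16 * (L + rho) ^+ 3 / ((1 - beta) ^+ 2 * rho ^+ 3) *
  (if 2 < p then N_bound p mu rho beta eps Delta0 + 1
   else N_bound p mu rho beta eps Delta0).

(* The proof tracks the proximal gap Δ_k = f(x_k) - min_z (f_k(z) + ρ/2‖z - x_k‖²).
   1. Gap estimates, from L-smoothness and the model conditions, with M = 2L + ρ:
      ‖∇f(x_k)‖²/(2M) <= Δ_k;  Δ_k <= ‖∇f(x_k)‖²/(2ρ) right after a descent step;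
      a null step contracts Δ by the factor 1 - ρ(1-β)/(8M).  Comparing the
      three shows that a streak of consecutive null steps has length at most
      C = 16(L+ρ)³/((1-β)²ρ³).  Convexity moreover gives, for t ∈ [0,1],
      Δ_k >= t(f(x_k) - f* ) - ρ/2 t² dist(x_k, X* )².
   2. A counting argument for any potential Φ of the optimality gap that drops
      by one per descent step (given the bounds of 1): the accuracy ε is
      reached after at most Φ(Δ_0) - Φ(ε) descent steps, and at most C null
      steps per descent step ([pbm_complexity]).
   3. Two potentials: for p > 2 a function that is logarithmic above a
      threshold T and behaves like a^{-(1-2/p)} below it; for p = 2 a
      logarithm.  Their ranges are bounded by the N of the theorem. *)

From HB Require Import structures.
From mathcomp Require Import all_boot all_order all_algebra.
From mathcomp Require Import all_classical all_reals exp sequences.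
From mathcomp Require Import ring lra.
Import Order.TTheory GRing.Theory Num.Theory.
Local Open Scope ring_scope.
Local Open Scope classical_set_scope.
Set Implicit Arguments. Unset Strict Implicit.

Section Euclid.
Variables (R : realType) (d : nat).
Implicit Types (u v w : 'rV[R]_d).

Lemma dotC u v : dot u v = dot v u.
Proof. by apply: eq_bigr => i _; rewrite mulrC. Qed.

Lemma dotDl u v w : dot (u + v) w = dot u w + dot v w.
Proof. by rewrite /dot -big_split; apply: eq_bigr => i _; rewrite mxE mulrDl. Qed.

Lemma dotZl (a : R) u v : dot (a *: u) v = a * dot u v.
Proof. by rewrite /dot mulr_sumr; apply: eq_bigr => i _; rewrite mxE mulrA. Qed.

Lemma dotNl u v : dot (- u) v = - dot u v.
Proof. by rewrite -scaleN1r dotZl mulN1r. Qed.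

Lemma dotBl u v w : dot (u - v) w = dot u w - dot v w.
Proof. by rewrite dotDl dotNl. Qed.

Lemma dotDr u v w : dot w (u + v) = dot w u + dot w v.
Proof. by rewrite dotC dotDl !(dotC w). Qed.

Lemma dotZr (a : R) u v : dot u (a *: v) = a * dot u v.
Proof. by rewrite dotC dotZl dotC. Qed.

Lemma dotNr u v : dot u (- v) = - dot u v.
Proof. by rewrite dotC dotNl dotC. Qed.

Lemma dot0l v : dot 0 v = 0.
Proof. by rewrite -(scale0r 0) dotZl mul0r. Qed.

Lemma dot0r v : dot v 0 = 0.
Proof. by rewrite dotC dot0l. Qed.

Lemma dot_ge0 u : 0 <= dot u u.
Proof. by apply: sumr_ge0 => i _; rewrite -expr2 sqr_ge0. Qed.

Lemma dot_eq0 u : dot u u = 0 -> u = 0.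
Proof.
move=> u0; apply/rowP => i; rewrite mxE.
have sq_ge0 (j : 'I_d) : xpredT j -> 0 <= u ord0 j * u ord0 j.
  by rewrite -expr2 sqr_ge0.
have ui0 := @psumr_eq0P R _ xpredT (fun j => u ord0 j * u ord0 j) sq_ge0 u0 i isT.
by apply/eqP; rewrite -sqrf_eq0 expr2 ui0.
Qed.

Lemma enorm_ge0 u : 0 <= enorm u.
Proof. exact: sqrtr_ge0. Qed.

Lemma enorm_sq u : enorm u ^+ 2 = dot u u.
Proof. by rewrite /enorm sqr_sqrtr // dot_ge0. Qed.

Lemma enormZ (a : R) u : enorm (a *: u) = `|a| * enorm u.
Proof. by rewrite /enorm dotZl dotZr mulrA -expr2 sqrtrM ?sqr_ge0 // sqrtr_sqr. Qed.

Lemma enormN u : enorm (- u) = enorm u.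
Proof. by rewrite -scaleN1r enormZ normrN normr1 mul1r. Qed.

Lemma enormB u v : enorm (u - v) = enorm (v - u).
Proof. by rewrite -enormN opprB. Qed.

Lemma enorm_eq0 u : enorm u = 0 -> u = 0.
Proof. by move=> h; apply: dot_eq0; rewrite -enorm_sq h expr2 mul0r. Qed.

Lemma enorm_gt0 u : u != 0 -> 0 < enorm u.
Proof. by move=> u0; rewrite lt_neqAle enorm_ge0 andbT eq_sym; apply: contra u0 => /eqP/enorm_eq0->. Qed.

Lemma sqnormD u v : enorm (u + v) ^+ 2 = enorm u ^+ 2 + 2 * dot u v + enorm v ^+ 2.
Proof. by rewrite !enorm_sq dotDl !dotDr (dotC v u); ring. Qed.

(* Cauchy-Schwarz: expand ‖ ‖v‖u - ‖u‖v ‖² >= 0. *)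
Lemma dot_le_enorm u v : dot u v <= enorm u * enorm v.
Proof.
have [u0|u0] := eqVneq u 0; first by rewrite u0 dot0l mulr_ge0 ?enorm_ge0.
have [v0|v0] := eqVneq v 0; first by rewrite v0 dot0r mulr_ge0 ?enorm_ge0.
have nuv := mulr_gt0 (enorm_gt0 u0) (enorm_gt0 v0).
have := sqr_ge0 (enorm (enorm v *: u - enorm u *: v)).
rewrite sqnormD enormN !enormZ dotNr dotZl dotZr !ger0_norm ?enorm_ge0 //.
by nra.
Qed.

Lemma convex_comb_sub (t : R) w c : t *: w + (1 - t) *: c - c = t *: (w - c).
Proof. by apply/rowP => i; rewrite !mxE; ring. Qed.

End Euclid.

Section SmoothConvex.
Variables (R : realType) (d : nat) (f : 'rV[R]_d -> R) (g : 'rV[R]_d -> 'rV[R]_d).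
Hypothesis g_sub : forall y, is_subgradient f y (g y).

(* At a point of differentiability the subgradient is the gradient: a
   subgradient differing from it would contradict the first-order expansion
   along the direction of the difference. *)
Lemma subgradient_eq_gradient (gradf : 'rV[R]_d -> 'rV[R]_d) :
  has_gradient f gradf -> forall y, g y = gradf y.
Proof.
move=> hgrad y; apply/eqP; rewrite -subr_eq0; apply/negPn/negP => v0.
set v := g y - gradf y in v0; have nv := enorm_gt0 v0.
have [del del0 expand] := hgrad y (enorm v / 2) ltac:(by rewrite divr_gt0).
set t := del / (2 * enorm v).
have t0 : 0 < t by rewrite divr_gt0 // mulr_gt0.
have step_norm : enorm (t *: v) = del / 2.
  by rewrite enormZ ger0_norm ?ltW // /t; field; lra.
have := expand (t *: v); rewrite step_norm => /(_ ltac:(lra)) hexp.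
have := g_sub y (y + t *: v); rewrite addrAC subrr add0r => hsub.
have dot_v : dot v (t *: v) = t * enorm v ^+ 2 by rewrite dotZr enorm_sq.
rewrite /v dotBl in dot_v.
have := ler_norm (f (y + t *: v) - f y - dot (gradf y) (t *: v)) => hn.
have : t * enorm v ^+ 2 = del * enorm v / 2 by rewrite /t; field; lra.
by nra.
Qed.

Variable L : R.
Hypothesis f_smooth : smooth_with f L.

Lemma smooth_const_ge0 (c : 'rV[R]_d) : g c != 0 -> 0 <= L.
Proof.
case: f_smooth => gf [hg lip] gc0.
have E := subgradient_eq_gradient hg.
have := lip (c + g c) c; rewrite addrAC subrr add0r -!E.
have := enorm_gt0 gc0; have := enorm_ge0 (g (c + g c) - g c).
by nra.
Qed.

(* Quadratic upper model: f y <= f w + <g w, y - w> + L ‖y - w‖².  (The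
   constant L instead of L/2 comes from a one-line argument using only the
   subgradient inequality at y and Cauchy-Schwarz.) *)
Lemma smooth_upper_bound y w :
  f y <= f w + dot (g w) (y - w) + L * enorm (y - w) ^+ 2.
Proof.
case: f_smooth => gf [hg lip].
have E := subgradient_eq_gradient hg.
have hs := g_sub y w.
have h1 : dot (g y) (w - y) = - dot (g y) (y - w) by rewrite -dotNr opprB.
have h2 : dot (g y) (y - w) = dot (g w) (y - w) + dot (g y - g w) (y - w).
  by rewrite dotBl; ring.
have h3 := dot_le_enorm (g y - g w) (y - w).
have h4 := lip y w; rewrite -!E in h4.
have h5 := ler_wpM2r (enorm_ge0 (y - w)) h4.
by rewrite expr2; nra.
Qed.

End SmoothConvex.

Lemma zero_subgradient_min (R : realType) (d : nat) (f : 'rV[R]_d -> R)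
    (c gc : 'rV[R]_d) :
  is_subgradient f c gc -> gc = 0 -> forall y, f c <= f y.
Proof. by move=> hsub gc0 y; have := hsub y; rewrite gc0 dot0l addr0. Qed.

(* Read e as the model error
   at the rejected trial point, G as the distance between the aggregate slope
   and the new cut slope, r as the length of the next proximal step, D as the
   increase of the proximal value and hk as the proximal gap: if the new cut
   forces D >= e - G r, the aggregate forces D >= rho/2 r^2, and the failed
   descent test gives (1 - beta) hk <= e, then D is a fixed fraction of hk. *)
Lemma null_step_arith (R : realFieldType) (M L rho beta e G r D hk : R) :
  0 < rho -> 0 <= L -> M = 2 * L + rho -> 0 < beta -> beta < 1 ->
  0 <= G -> 0 <= r -> G ^+ 2 <= 2 * M * e ->
  rho / 2 * r ^+ 2 <= D -> e - G * r <= D ->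
  (1 - beta) * hk <= e -> 0 <= hk ->
  rho * (1 - beta) / (8 * M) * hk <= D.
Proof.
move=> r0 L0 eM b0 b1 G0 rr0 hG hA hB he hk0.
have M0 : 0 < M by lra.
have e0 : 0 <= e by nra.
set m := rho * e / (8 * M).
have hm : 8 * M * m = rho * e by rewrite /m; field; lra.
have m1 : rho * (1 - beta) / (8 * M) * hk <= m.
  have -> : m = rho / (8 * M) * e by rewrite /m; ring.
  have -> : rho * (1 - beta) / (8 * M) * hk = rho / (8 * M) * ((1 - beta) * hk).
    by ring.
  by apply: ler_wpM2l => //; apply: divr_ge0; lra.
apply: (le_trans m1).
have [short|long] := lerP m (rho / 2 * r ^+ 2); first lra.
(* A long proximal step: the cut term G r is at most 7/8 of e. *)
have h4 : 4 * M * r ^+ 2 < e.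
  have : rho * (4 * M * r ^+ 2) < rho * e by nra.
  by rewrite ltr_pM2l.
have h6 : (G * r) ^+ 2 * 2 <= e ^+ 2 by rewrite exprMn; nra.
have h7 : G * r <= 7 / 8 * e.
  rewrite leNgt; apply/negP => h9; move: h6; rewrite expr2; nra.
have : m <= e / 8.
  have h12 : rho * e <= M * e by apply: ler_wpM2r => //; lra.
  have : (8 * M) * m <= (8 * M) * (e / 8).
    by rewrite hm (_ : 8 * M * (e / 8) = M * e) //; field.
  by rewrite ler_pM2l; lra.
lra.
Qed.

(* A potential Φ for the optimality gap that drops by at least one at every
   descent step compatible with the information available: the gap goes from
   a to a' > ε, the step achieved a' <= a - βh for a proximal gap h obeying the
   convexity bound h >= ta - ρ/2 t²D² (t ∈ [0,1]), and D is a distance to the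
   solutions compatible with the growth condition μ D^p <= a. *)
Definition descent_potential (R : realType) (mu p rho beta eps : R) (Phi : R -> R) :=
  forall a a' D h : R, eps < a' -> 0 <= D -> mu * powR D p <= a ->
    a' <= a - beta * h ->
    (forall t, 0 <= t <= 1 -> t * a - rho / 2 * t ^+ 2 * D ^+ 2 <= h) ->
    Phi a' <= Phi a - 1.

Section ProximalBundle.
Variables (R : realType) (d : nat) (f : 'rV[R]_d -> R) (L fstar : R)
    (g : 'rV[R]_d -> 'rV[R]_d) (beta rho : R)
    (x z : nat -> 'rV[R]_d) (fmod : nat -> 'rV[R]_d -> R).
Hypotheses (f_conv : convex_fun f) (f_smooth : smooth_with f L)
  (g_sub : forall y, is_subgradient f y (g y))
  (beta_gt0 : 0 < beta) (beta_lt1 : beta < 1) (rho_gt0 : 0 < rho) (L_ge0 : 0 <= L)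
  (run : PBM_run f g beta rho x z fmod).

Definition is_descent k := descent_step beta f (fmod k) (x k) (z k.+1).

Definition prox_value k := fmod k (z k.+1) + rho / 2 * enorm (z k.+1 - x k) ^+ 2.

Definition gap k := f (x k) - prox_value k.

Definition lin_error k := f (z k.+1) - fmod k (z k.+1).
Definition agg_residual k := rho *: (x k - z k.+1) - g (z k.+1).

Definition Msc := 2 * L + rho.

Lemma Msc_gt0 : 0 < Msc.
Proof. by rewrite /Msc; move: L_ge0 rho_gt0; lra. Qed.

Lemma next_center k : x k.+1 = if is_descent k then z k.+1 else x k.
Proof. by case: run => _ _ _ H _; exact: H. Qed.

Lemma null_center k : ~~ is_descent k -> x k.+1 = x k.
Proof. by move=> /negbTE nd; rewrite next_center nd. Qed.

Lemma model_below k y : fmod k y <= f y.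
Proof.
case: run => [[_ fmod0]] _ _ _ H.
by case: k => [|k]; [rewrite fmod0; apply: g_sub | case: (H k)].
Qed.

Lemma prox_optimal k y : prox_value k <= fmod k y + rho / 2 * enorm (y - x k) ^+ 2.
Proof. by case: run => _ _ H _ _; exact: H. Qed.

Lemma model_cut k y : f (z k.+1) + dot (g (z k.+1)) (y - z k.+1) <= fmod k.+1 y.
Proof. by case: run => _ _ _ _ H; case: (H k). Qed.

Lemma model_aggregate k y : ~~ is_descent k ->
  fmod k (z k.+1) + dot (rho *: (x k - z k.+1)) (y - z k.+1) <= fmod k.+1 y.
Proof. by case: run => _ _ _ _ H; case: (H k) => _ _ h /h. Qed.

Definition cut_at_center k :=
  forall y, f (x k) + dot (g (x k)) (y - x k) <= fmod k y.

Lemma cut_at_center0 : cut_at_center 0.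
Proof. by case: run => [[_ fmod0]] _ _ _ _ y; rewrite fmod0. Qed.

Lemma cut_at_centerS k : is_descent k -> cut_at_center k.+1.
Proof. by move=> hd y; rewrite next_center hd; apply: model_cut. Qed.

Lemma prox_value_le k y : prox_value k <= f y + rho / 2 * enorm (y - x k) ^+ 2.
Proof. by apply: (le_trans (prox_optimal k y)); rewrite lerD2r model_below. Qed.

(* Δ_k >= ‖g(x_k)‖²/(2M): compare with the gradient step y = x_k - g(x_k)/M
   using the quadratic upper bound of f. *)
Lemma gap_lower_grad k : enorm (g (x k)) ^+ 2 / (2 * Msc) <= gap k.
Proof.
have r0 := rho_gt0; have L0 := L_ge0.
set c := x k; set y := c + (- Msc^-1) *: g c.
have e : y - c = (- Msc^-1) *: g c by rewrite /y addrAC subrr add0r.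
have upper_y := smooth_upper_bound g_sub f_smooth y c.
have prox_y := prox_value_le k y.
rewrite e dotZr enormZ normrN -enorm_sq in upper_y.
rewrite e enormZ normrN in prox_y.
have M0 := Msc_gt0.
have Mi : 0 <= Msc^-1 by rewrite invr_ge0 ltW.
rewrite (ger0_norm Mi) in upper_y prox_y.
rewrite /gap -/c.
set G := enorm (g c) in upper_y prox_y *.
have hm : Msc^-1 * Msc = 1 by rewrite mulVf // gt_eqF.
clear e; clearbody y c G.
rewrite (_ : G ^+ 2 / (2 * Msc) = G ^+ 2 * Msc^-1 - (L + rho / 2) * (Msc^-1 * G) ^+ 2).
  by rewrite /Msc in upper_y prox_y hm M0 Mi *; nra.
by rewrite /Msc in hm M0 *; field; lra.
Qed.

Lemma gap_ge0 k : 0 <= gap k.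
Proof.
apply: le_trans (gap_lower_grad k); apply: divr_ge0; first exact: sqr_ge0.
by have := Msc_gt0; lra.
Qed.

(* Δ_k <= ‖g(x_k)‖²/(2ρ) when the model contains the cut at x_k: the cut alone
   bounds the proximal value from below. *)
Lemma gap_upper_cut k : cut_at_center k -> gap k <= enorm (g (x k)) ^+ 2 / (2 * rho).
Proof.
move=> hc; have r0 := rho_gt0; rewrite /gap /prox_value.
set c := x k; set u := z k.+1 - x k.
have h1 := hc (z k.+1); rewrite -/c -/u in h1.
have h2 := sqr_ge0 (enorm (g c + rho *: u)).
rewrite sqnormD enormZ dotZr (ger0_norm (ltW rho_gt0)) in h2.
rewrite (_ : enorm (g c) ^+ 2 / (2 * rho) =
  (enorm (g c) ^+ 2 + 2 * (rho * dot (g c) u) + (rho * enorm u) ^+ 2) / (2 * rho)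
   - dot (g c) u - rho / 2 * enorm u ^+ 2); last by field; lra.
have : 0 <= (enorm (g c) ^+ 2 + 2 * (rho * dot (g c) u) + (rho * enorm u) ^+ 2) / (2 * rho).
  by apply: divr_ge0 => //; lra.
lra.
Qed.

(* After a null step the aggregate residual is controlled by the model error:
   test the new model along the residual, y = z_{k+1} + agg_residual/M. *)
Lemma agg_residual_bound k : ~~ is_descent k ->
  enorm (agg_residual k) ^+ 2 <= 2 * Msc * lin_error k.
Proof.
move=> hn; have M0 := Msc_gt0; have r0 := rho_gt0; have L0 := L_ge0.
set w := agg_residual k; set G := enorm w; set a := Msc^-1.
have a0 : 0 < a by rewrite invr_gt0.
have aM : a * Msc = 1 by rewrite mulVf // gt_eqF.
set y := z k.+1 + a *: w.
have ey : y - z k.+1 = a *: w by rewrite /y addrAC subrr add0r.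
have h1 := model_aggregate y hn.
have h2 := model_below k.+1 y.
have h3 := smooth_upper_bound g_sub f_smooth y (z k.+1).
rewrite ey dotZr in h1.
rewrite ey dotZr enormZ (ger0_norm (ltW a0)) -/G in h3.
have hd : dot (rho *: (x k - z k.+1)) w = dot (g (z k.+1)) w + G ^+ 2.
  by rewrite /G enorm_sq {2}/w /agg_residual dotBl; ring.
rewrite hd in h1.
have h4 : a * G ^+ 2 <= lin_error k + L * (a * G) ^+ 2 by rewrite /lin_error; lra.
clearbody a y G; clear ey h1 h2 h3 hd.
have := ler_wpM2l (ltW (mulr_gt0 M0 M0)) h4.
rewrite (_ : Msc * Msc * (a * G ^+ 2) = (a * Msc) * Msc * G ^+ 2); last by ring.
rewrite (_ : Msc * Msc * _ = Msc ^+ 2 * lin_error k + L * (a * Msc) ^+ 2 * G ^+ 2); last by ring.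
rewrite aM /Msc in M0 *; nra.
Qed.

(* On a null step the proximal value increases by at least ρ/2‖q‖² (from the
   aggregate) and by at least e - G‖q‖ (from the new cut), where q is the next
   proximal step. *)
Lemma prox_value_increase k : ~~ is_descent k ->
  let q := z k.+2 - z k.+1 in
  rho / 2 * enorm q ^+ 2 <= prox_value k.+1 - prox_value k /\
  lin_error k - enorm (agg_residual k) * enorm q <= prox_value k.+1 - prox_value k.
Proof.
move=> hn q.
have hA := model_aggregate (z k.+2) hn.
have hB := model_cut k (z k.+2).
have hcs := dot_le_enorm (agg_residual k) q.
rewrite /prox_value /lin_error (null_center hn) -/q in hA hB hcs *.
set u := z k.+1 - x k.
have hsq := sqnormD q u.
rewrite (_ : q + u = z k.+2 - x k) in hsq; last by rewrite /q /u addrA subrK.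
have hA' : dot (rho *: (x k - z k.+1)) q = - rho * dot u q.
  by rewrite dotZl -(opprB (z k.+1) (x k)) dotNl; ring.
have hB' : dot (g (z k.+1)) q = - dot (agg_residual k) q - rho * dot u q.
  by rewrite /agg_residual dotBl hA'; ring.
rewrite hA' in hA; rewrite hB' in hB; rewrite (dotC q u) in hsq; rewrite hsq.
have : 0 <= rho / 2 * enorm q ^+ 2.
  by apply: mulr_ge0; [have := rho_gt0; lra | exact: sqr_ge0].
by clearbody q u; split; lra.
Qed.

Definition rate := rho * (1 - beta) / (8 * Msc).

Lemma null_step_contraction k : ~~ is_descent k -> gap k.+1 <= (1 - rate) * gap k.
Proof.
move=> hn; have b0 := beta_gt0; have b1 := beta_lt1; have r0 := rho_gt0.
have [hA hB] := prox_value_increase hn.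
have hen : (1 - beta) * gap k <= lin_error k.
  move: hn; rewrite /is_descent /descent_step -ltNge /gap /prox_value /lin_error.
  have : 0 <= (1 - beta) * (rho / 2 * enorm (z k.+1 - x k) ^+ 2).
    by apply: mulr_ge0; [lra | apply: mulr_ge0; [lra | apply: sqr_ge0]].
  by nra.
have := null_step_arith rho_gt0 L_ge0 erefl beta_gt0 beta_lt1 (enorm_ge0 _)
  (enorm_ge0 _) (agg_residual_bound hn) hA hB hen (gap_ge0 k).
by rewrite /gap (null_center hn) /rate; lra.
Qed.

Lemma descent_decrease k : is_descent k ->
  f (x k.+1) - fstar <= f (x k) - fstar - beta * gap k.
Proof.
move=> hd; have r0 := rho_gt0; have b0 := beta_gt0.
move: (hd); rewrite /is_descent /descent_step next_center hd /gap /prox_value => hdesc.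
have : 0 <= rho / 2 * enorm (z k.+1 - x k) ^+ 2.
  by apply: mulr_ge0; [lra | apply: sqr_ge0].
by nra.
Qed.

Hypothesis fstar_min : is_min_value f fstar.

Definition Xstar := [set w | f w = fstar].

Lemma dist_Xstar_ge0 (c : 'rV[R]_d) : 0 <= dist c Xstar.
Proof.
case: fstar_min => _ [w hw].
apply: lb_le_inf; first by exists (enorm (c - w)); exists w.
by move=> _ [y _ <-]; apply: enorm_ge0.
Qed.

Lemma dist_Xstar_approx (c : 'rV[R]_d) (eta : R) : 0 < eta ->
  exists w, f w = fstar /\ enorm (w - c) < dist c Xstar + eta.
Proof.
move=> eta0; case: fstar_min => _ [w0 hw0].
have ne : [set enorm (c - y) | y in Xstar] !=set0 by exists (enorm (c - w0)); exists w0.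
have : inf [set enorm (c - y) | y in Xstar] < dist c Xstar + eta by rewrite /dist; lra.
by case/(inf_lt ne) => _ [w hw <-] h; exists w; split => //; rewrite enormB.
Qed.

(* Testing the proximal subproblem at the convex combination of x_k with a
   minimizer w: Δ_k >= t (f(x_k) - min f) - ρ/2 t² ‖w - x_k‖² for t ∈ [0, 1]. *)
Lemma gap_lower_minimizer k t (w : 'rV[R]_d) : 0 <= t <= 1 -> f w = fstar ->
  t * (f (x k) - fstar) - rho / 2 * t ^+ 2 * enorm (w - x k) ^+ 2 <= gap k.
Proof.
move=> /andP [t0 t1] hw.
set c := x k; set y := t *: w + (1 - t) *: c.
have h1 := f_conv w c (t := t) ltac:(by rewrite t0 t1).
have h2 := prox_value_le k y.
rewrite -/c -/y convex_comb_sub enormZ (ger0_norm t0) exprMn mulrA in h2.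
rewrite -/y hw in h1.
by rewrite /gap -/c; lra.
Qed.

(* The same bound with ‖w - x_k‖ replaced by dist(x_k, X^* ), by approximating
   the infimum. *)
Lemma gap_lower_dist k t : 0 <= t <= 1 ->
  t * (f (x k) - fstar) - rho / 2 * t ^+ 2 * dist (x k) Xstar ^+ 2 <= gap k.
Proof.
move=> ht; have /andP [t0 t1] := ht; have r0 := rho_gt0.
set D := dist (x k) Xstar; have D0 : 0 <= D := dist_Xstar_ge0 (x k).
rewrite leNgt; apply/negP => hlt.
set slack := t * (f (x k) - fstar) - rho / 2 * t ^+ 2 * D ^+ 2 - gap k.
have slack0 : 0 < slack by rewrite /slack; lra.
have q0 : 0 < rho * (2 * D + 1) by apply: mulr_gt0; lra.
set eta := Num.min 1 (slack / (rho * (2 * D + 1))).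
have eta0 : 0 < eta by rewrite /eta lt_min ltr01 divr_gt0.
have eta1 : eta <= 1 by rewrite /eta ge_min lexx.
have eta_slack : eta * (rho * (2 * D + 1)) <= slack.
  by rewrite -ler_pdivlMr // /eta ge_min lexx orbT.
have [w [hw hwc]] := dist_Xstar_approx (x k) eta0.
have H := gap_lower_minimizer k ht hw.
have n0 := enorm_ge0 (w - x k).
have hsq : enorm (w - x k) ^+ 2 <= (D + eta) ^+ 2 by rewrite -/D in hwc; nra.
have tt : t ^+ 2 <= 1 by rewrite expr_le1.
have hm : t ^+ 2 * enorm (w - x k) ^+ 2 <= t ^+ 2 * D ^+ 2 + eta * (2 * D + 1).
  have : (D + eta) ^+ 2 - D ^+ 2 <= eta * (2 * D + 1) by nra.
  have : 0 <= (D + eta) ^+ 2 - D ^+ 2 by nra.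
  by nra.
rewrite /slack in slack0 eta_slack; clearbody D eta slack.
by nra.
Qed.

Lemma count_iotaS (P : pred nat) k :
  count P (iota 0 k.+1) = (count P (iota 0 k) + P k)%N.
Proof. by rewrite -addn1 iotaD count_cat /= add0n addn0. Qed.

Fixpoint null_streak k :=
  if k is k'.+1 then (if is_descent k' then 0 else (null_streak k').+1)%N else 0%N.

Definition descents k := n_descent beta f x z fmod k.
Definition nulls k := n_null beta f x z fmod k.

Lemma descentsS k : descents k.+1 = (descents k + is_descent k)%N.
Proof. exact: count_iotaS. Qed.

Lemma nullsS k : nulls k.+1 = (nulls k + ~~ is_descent k)%N.
Proof. exact: (count_iotaS (fun k => ~~ is_descent k)). Qed.

Lemma descents_nulls k : (descents k + nulls k)%N = k.
Proof. by rewrite /descents /nulls /n_descent /n_null count_predC size_iota. Qed.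

Definition null_ratio := 16 * (L + rho) ^+ 3 / ((1 - beta) ^+ 2 * rho ^+ 3).

Lemma null_ratio_ge0 : 0 <= null_ratio.
Proof.
have r0 := rho_gt0; have L0 := L_ge0; have b1 := beta_lt1.
by rewrite /null_ratio; apply: divr_ge0; apply: mulr_ge0 => //; apply: exprn_ge0; lra.
Qed.

Lemma rate_gt0 : 0 < rate.
Proof.
have M0 := Msc_gt0; have b1 := beta_lt1; have r0 := rho_gt0.
by rewrite /rate; apply: divr_gt0; [apply: mulr_gt0 | lra]; lra.
Qed.

Lemma rate_le1 : rate <= 1.
Proof.
have M0 := Msc_gt0; have b0 := beta_gt0; have r0 := rho_gt0; have L0 := L_ge0.
by rewrite /rate ler_pdivrMr; [rewrite /Msc; nra | lra].
Qed.

(* Streak invariant: Δ_k (1 + s_k r) <= ‖g(x_k)‖²/(2ρ), where s_k is the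
   current null streak.  It holds after a descent step by [gap_upper_cut] and
   is propagated by [null_step_contraction] since (1-r)(1+(s+1)r) <= 1+sr. *)
Definition streak_invariant k :=
  gap k * (1 + (null_streak k)%:R * rate) <= enorm (g (x k)) ^+ 2 / (2 * rho).

Lemma streak_invariant_null k : ~~ is_descent k ->
  streak_invariant k -> streak_invariant k.+1.
Proof.
move=> hn inv; rewrite /streak_invariant /= (negbTE hn) (null_center hn) -natr1.
apply: le_trans inv.
have := null_step_contraction hn; have h0 := gap_ge0 k.
have rp := rate_gt0; have r1 := rate_le1; have t0 := ler0n R (null_streak k).
set s := (null_streak k)%:R => hc.
have q0 : 0 <= 1 + (s + 1) * rate by nra.
apply: le_trans (ler_wpM2r q0 hc) _.
rewrite (_ : _ * gap k * _ = gap k * ((1 - rate) * (1 + (s + 1) * rate))); last by ring.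
apply: ler_wpM2l => //.
have : 0 <= rate * rate * (s + 1) by apply: mulr_ge0; [nra | lra].
by nra.
Qed.

Lemma streak_invariant_all k : streak_invariant k.
Proof.
elim: k => [|k IH]; first by rewrite /streak_invariant /= mul0r addr0 mulr1;
  exact: gap_upper_cut cut_at_center0.
have [hd|hn] := boolP (is_descent k); last exact: streak_invariant_null.
rewrite /streak_invariant /= hd mul0r addr0 mulr1.
exact: gap_upper_cut (cut_at_centerS hd).
Qed.

(* Comparing the invariant with Δ_k >= ‖g(x_k)‖²/(2M) bounds the streak by C,
   as long as x_k is not a minimizer. *)
Lemma null_streak_le k : g (x k) != 0 -> (null_streak k)%:R <= null_ratio.
Proof.
move=> g0; set s := (null_streak k)%:R.
have G0 := enorm_gt0 g0; set G := enorm (g (x k)) in G0.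
have M0 := Msc_gt0; have r0 := rho_gt0; have b0 := beta_gt0; have b1 := beta_lt1.
have L0 := L_ge0; have rp := rate_gt0; have s0 : 0 <= s := ler0n R _.
have hs : 1 + s * rate <= Msc / rho.
  have := le_trans (ler_wpM2r _ (gap_lower_grad k)) (streak_invariant_all k).
  rewrite -/s -/G => /(_ ltac:(nra)).
  rewrite (_ : G ^+ 2 / (2 * rho) = G ^+ 2 / (2 * Msc) * (Msc / rho)); last first.
    by field; rewrite !gt_eqF.
  by rewrite ler_pM2l //; apply: divr_gt0; [apply: exprn_gt0 | lra].
have : s <= 16 * L * Msc / (rho ^+ 2 * (1 - beta)).
  have -> : 16 * L * Msc / (rho ^+ 2 * (1 - beta)) = (Msc / rho - 1) / rate.
    by rewrite /rate /Msc; field; rewrite !gt_eqF //; lra.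
  by rewrite ler_pdivlMr //; lra.
move/le_trans; apply.
rewrite /null_ratio /Msc ler_pdivlMr; last by apply: mulr_gt0; apply: exprn_gt0; lra.
have -> : 16 * L * (2 * L + rho) / (rho ^+ 2 * (1 - beta)) * ((1 - beta) ^+ 2 * rho ^+ 3)
  = 16 * (L * (2 * L + rho) * rho * (1 - beta)) by field; rewrite !gt_eqF //; lra.
rewrite ler_pM2l; last lra.
have X0 : 0 <= L * (2 * L + rho) * rho by apply: mulr_ge0; [apply: mulr_ge0 => //; lra | lra].
have q1 : 0 <= L * L * L by apply: mulr_ge0 => //; apply: mulr_ge0.
have q2 : 0 <= L * rho * rho by apply: mulr_ge0 => //; [apply: mulr_ge0 => //; lra| lra].
have q3 : 0 <= rho * rho * rho by apply: mulr_ge0; [apply: mulr_ge0|]; lra.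
have q4 : 0 <= L * L * rho by apply: mulr_ge0 => //; [apply: mulr_ge0| lra].
have -> : (L + rho) ^+ 3 = (L + rho) * (L + rho) * (L + rho) by ring.
by nra.
Qed.

Variables (mu p eps : R) (Phi : R -> R).
Hypotheses (growth : forall y, mu * powR (dist y Xstar) p <= f y - fstar)
  (eps_gt0 : 0 < eps) (Phi_drop : descent_potential mu p rho beta eps Phi)
  (Phi_above : forall a, eps < a -> Phi eps < Phi a).

Definition Delta0 := f (x 0) - fstar.

Definition above_eps k := forall j, (j <= k)%N -> eps < f (x j) - fstar.

Lemma above_eps_pred k : above_eps k.+1 -> above_eps k.
Proof. by move=> h j hj; apply: h; apply: leqW. Qed.

Lemma g_nonzero k : above_eps k -> g (x k) != 0.
Proof.
move=> /(_ k (leqnn k)) hk; apply/eqP => g0.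
case: fstar_min => _ [w hw].
by have := zero_subgradient_min (g_sub (x k)) g0 w; have := eps_gt0; lra.
Qed.

Lemma potential_descents k : above_eps k ->
  Phi (f (x k) - fstar) <= Phi Delta0 - (descents k)%:R.
Proof.
elim: k => [|k IH] hk; first by rewrite /descents /n_descent /= subr0.
have {}IH := IH (above_eps_pred hk).
rewrite descentsS natrD.
have [hd|hn] := boolP (is_descent k); last by rewrite (null_center hn) addr0.
rewrite /= mulr1n; have := Phi_drop (hk k.+1 (leqnn _)) (dist_Xstar_ge0 (x k)) (growth (x k))
  (descent_decrease hd) (fun t ht => gap_lower_dist k ht).
by lra.
Qed.

Lemma descents_lt k : above_eps k -> (descents k)%:R < Phi Delta0 - Phi eps.
Proof.
move=> hk; have := potential_descents hk.
by have := Phi_above (hk k (leqnn k)); lra.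
Qed.

(* The null steps so far number at most C per descent step (each closing a
   streak of length <= C) plus the current streak. *)
Lemma nulls_le k : above_eps k ->
  (nulls k)%:R <= null_ratio * (descents k)%:R + (null_streak k)%:R.
Proof.
elim: k => [|k IH] hk; first by rewrite /nulls /n_null /= mulr0 addr0.
have {}IH := IH (above_eps_pred hk).
have hs := null_streak_le (g_nonzero (above_eps_pred hk)).
rewrite nullsS descentsS /= !natrD.
by case: (is_descent k) => /=; rewrite ?natr0 ?natr1 -?natr1; lra.
Qed.

(* Termination: otherwise k = descents + nulls would be bounded by
   (1 + C)(Φ(Δ0) - Φ(ε)) + C for every k. *)
Lemma eps_reached : exists k, f (x k) - fstar <= eps.
Proof.
apply/not_existsP => Hn.
have hk k : above_eps k by move=> j _; rewrite ltNge; apply/negP/Hn.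
set B := (1 + null_ratio) * (Phi Delta0 - Phi eps) + null_ratio.
set n := Num.Def.archi_bound `|B|.
have hn : B < n%:R by apply: le_lt_trans (ler_norm B) (archi_boundP _).
have hN := nulls_le (hk n); have hD := descents_lt (hk n).
have hS := null_streak_le (g_nonzero (hk n)); have c0 := null_ratio_ge0.
have hsum : (n%:R : R) = (descents n)%:R + (nulls n)%:R by rewrite -natrD descents_nulls.
have : (1 + null_ratio) * (descents n)%:R <= (1 + null_ratio) * (Phi Delta0 - Phi eps).
  by apply: ler_wpM2l; lra.
by rewrite /B in hn; nra.
Qed.

(* At the first iteration reaching ε the streak has just been closed, so the
   null steps are at most C per descent step. *)
Lemma nulls_at_hit k : above_eps k -> is_descent k ->
  (nulls k.+1)%:R <= null_ratio * (descents k.+1)%:R.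
Proof.
move=> hk hd; have := nulls_le hk; have := null_streak_le (g_nonzero hk).
rewrite nullsS descentsS hd addn0 natrD mulrDr mulr1; lra.
Qed.

Variable NB : R.
Hypotheses (eps_le : eps <= Delta0)
  (NB_bound : forall n : nat, (n%:R : R) < Phi Delta0 - Phi eps + 1 -> (n%:R : R) <= NB).

Lemma pbm_complexity : exists K,
  [/\ f (x K) - fstar <= eps, (descents K)%:R <= NB & (nulls K)%:R <= null_ratio * NB].
Proof.
have [K hK Kmin] := ex_minnP eps_reached.
exists K; have c0 := null_ratio_ge0.
case: K hK Kmin => [|k] hK Kmin.
  have NB0 : 0 <= NB.
    apply: (NB_bound (n := 0)); have [->|] := eqVneq eps Delta0; first lra.
    by move=> ne; have := Phi_above (_ : eps < Delta0); rewrite lt_neqAle ne eps_le => /(_ isT); lra.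
  by split => //; rewrite /nulls /n_null /= mulr_ge0.
have hk : above_eps k.
  by move=> j hj; rewrite ltNge; apply/negP => /Kmin; rewrite leqNgt ltnS hj.
have hd : is_descent k.
  apply/negPn/negP => hn; move: hK; rewrite (null_center hn).
  by have := hk k (leqnn k); lra.
have hD : (descents k.+1)%:R <= NB.
  by apply: NB_bound; rewrite descentsS hd /= addn1 -natr1; have := descents_lt hk; lra.
split => //; apply: le_trans (nulls_at_hit hk hd) _.
exact: ler_wpM2l.
Qed.

End ProximalBundle.

Section RealFacts.
Variable R : realType.
Implicit Types a b : R.

Lemma ln_le a b : 0 < a -> a <= b -> ln a <= ln b.
Proof. by move=> a0 ab; rewrite ler_ln ?posrE //; apply: lt_le_trans ab. Qed.

Lemma ln_lt a b : 0 < a -> a < b -> ln a < ln b.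
Proof. by move=> a0 ab; rewrite ltr_ln ?posrE //; apply: lt_trans ab. Qed.

Lemma lnMp a b : 0 < a -> 0 < b -> ln (a * b) = ln a + ln b.
Proof. by move=> a0 b0; rewrite lnM ?posrE. Qed.

Lemma expR_ln a : 0 < a -> expR (ln a) = a.
Proof. by move=> a0; rewrite lnK ?posrE. Qed.

Lemma ln_1m a : 0 <= a < 1 -> ln (1 - a) <= - a.
Proof. by move=> /andP [a0 a1]; have := @le_ln1Dx R (- a); rewrite addrC; apply; lra. Qed.

Lemma powR_exp a r : 0 < a -> powR a r = expR (r * ln a).
Proof. by move=> a0; rewrite /powR gt_eqF. Qed.

Lemma ceil_plus_ge (y : R) : Num.max 0 y <= ceil_plus y.
Proof.
rewrite /ceil_plus ge_max ler0z le_max lexx orbT /=.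
have /andP [_ h] := ceil_itv y.
by apply: le_trans h _; rewrite ler_int le_max lexx.
Qed.

Lemma nat_le_ceil (n : nat) (y : R) :
  (n%:R : R) < y + 1 -> (n%:R : R) <= (Num.ceil y)%:~R.
Proof.
move=> hn; suff : (n%:Z <= Num.ceil y)%R by rewrite -(ler_int R).
rewrite leNgt; apply/negP => hc.
have : (Num.ceil y <= n%:Z - 1)%R by rewrite -ltzD1 subrK.
by rewrite ceil_le_int intrD -natz intrN; lra.
Qed.

(* Positivity facts shared by every descent step: h >= 0 (take t = 0) and
   hence a > 0. *)
Lemma descent_data_pos (rho beta eps a a' D h : R) :
  0 < beta -> 0 < eps -> eps < a' -> a' <= a - beta * h ->
  (forall t, 0 <= t <= 1 -> t * a - rho / 2 * t ^+ 2 * D ^+ 2 <= h) ->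
  0 <= h /\ 0 < a.
Proof.
move=> b0 e0 ea' ha ht.
have h0 : 0 <= h.
  have := ht 0; rewrite lexx ler01 /= => /(_ isT).
  by rewrite !mul0r expr0n /= mulr0 mul0r subr0.
by split => //; have := mulr_ge0 (ltW b0) h0; lra.
Qed.

End RealFacts.

(* The potential for Hölder growth of order p > 2.  With α = 1 - 2/p and the
   threshold T = (ρ/μ^{2/p})^{1/α}, a descent step from optimality gap a
   reduces the gap by the factor 1 - β/2 when a > T, and by an amount
   proportional to a^{1+α} when a <= T.  Accordingly the potential is
   logarithmic above T and behaves like a^{-α} below T:
     Ψ(a) = (ε^{-α} - a^{-α})/A                                  if a <= T,
     Ψ(a) = (ε^{-α} - T^{-α})/A + (2/β) ln(a/T) + 1              if a > T,
   with A = αβT^{-α}/2; powers are written through expR and ln. *)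
Section HolderPotential.
Variables (R : realType) (mu rho beta p eps : R).
Hypotheses (mu_gt0 : 0 < mu) (rho_gt0 : 0 < rho) (beta_gt0 : 0 < beta)
  (beta_lt1 : beta < 1) (p_gt2 : 2 < p) (eps_gt0 : 0 < eps).

Definition alpha := 1 - 2 / p.
Definition lnT := (ln rho - 2 / p * ln mu) / alpha.
Definition Tthr := expR lnT.
(* (a/T)^α and a^{-α} *)
Definition scaled a := expR (alpha * (ln a - lnT)).
Definition ipow a := expR (- alpha * ln a).
Definition Acoef := alpha * beta * ipow Tthr / 2.
Definition Psi a := if a <= Tthr then (ipow eps - ipow a) / Acoef
  else (ipow eps - ipow Tthr) / Acoef + 2 / beta * (ln a - lnT) + 1.

Lemma alpha_gt0 : 0 < alpha.
Proof. by rewrite /alpha subr_gt0 ltr_pdivrMr; move: p_gt2; lra. Qed.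

Lemma alpha_lt1 : alpha < 1.
Proof.
have : 0 < 2 / p by apply: divr_gt0 => //; move: p_gt2; lra.
by rewrite /alpha; lra.
Qed.

Lemma ln_Tthr : ln Tthr = lnT.
Proof. by rewrite /Tthr expRK. Qed.

Lemma Tthr_gt0 : 0 < Tthr.
Proof. exact: expR_gt0. Qed.

Lemma Acoef_gt0 : 0 < Acoef.
Proof. by rewrite /Acoef !(divr_gt0, mulr_gt0) // ?expR_gt0 // alpha_gt0. Qed.

Lemma ipow_Tthr : ipow Tthr / Acoef = 2 / (alpha * beta).
Proof.
have := expR_gt0 (- alpha * ln Tthr); have := alpha_gt0.
by rewrite /Acoef -/(ipow Tthr) => ? ?; field; rewrite !gt_eqF.
Qed.

Lemma ipow_lt a b : 0 < a -> a < b -> ipow b < ipow a.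
Proof. by move=> a0 ab; rewrite /ipow ltr_expR; have := ln_lt a0 ab; have := alpha_gt0; nra. Qed.

Lemma ipow_le a b : 0 < a -> a <= b -> ipow b <= ipow a.
Proof. by move=> a0 ab; rewrite /ipow ler_expR; have := ln_le a0 ab; have := alpha_gt0; nra. Qed.

Lemma ipowM a b : 0 < a -> 0 < b -> ipow (a * b) = ipow a * ipow b.
Proof. by move=> a0 b0; rewrite /ipow lnMp // mulrDr expRD. Qed.

Lemma ipow_scaled a : ipow a * scaled a = ipow Tthr.
Proof. by rewrite /ipow /scaled -expRD ln_Tthr; congr expR; ring. Qed.

Lemma scaled_gt0 a : 0 < scaled a.
Proof. exact: expR_gt0. Qed.

Lemma scaled_le1 a : 0 < a -> a <= Tthr -> scaled a <= 1.
Proof.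
move=> a0 aT; rewrite /scaled -(expR0 R) ler_expR.
by have := ln_le a0 aT; rewrite ln_Tthr; have := alpha_gt0; nra.
Qed.

Lemma scaled_ge1 a : Tthr <= a -> 1 <= scaled a.
Proof.
move=> Ta; rewrite /scaled -expR0 ler_expR.
by have := ln_le Tthr_gt0 Ta; rewrite ln_Tthr; have := alpha_gt0; nra.
Qed.

(* Growth translated to the proximal scale: μ D^p <= a implies
   ρ D² (a/T)^α <= a, i.e. ρ D² <= T^α a^{1-α}.  Proved on logarithms. *)
Lemma growth_scaled (D a : R) : 0 < a -> 0 <= D -> mu * powR D p <= a ->
  rho * D ^+ 2 * scaled a <= a.
Proof.
move=> a0 D0 hg.
have [->|Dn0] := eqVneq D 0; first by rewrite expr0n /= mulr0 mul0r ltW.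
have Dp : 0 < D by rewrite lt_neqAle eq_sym Dn0.
have p0 : 0 < p by move: p_gt2; lra.
have ln_growth : ln mu + p * ln D <= ln a.
  rewrite powR_exp // in hg.
  rewrite -(expRK (p * ln D)) -lnMp ?expR_gt0 //.
  by apply: ln_le => //; apply: mulr_gt0 => //; exact: expR_gt0.
have ln_D : 2 * ln D <= 2 / p * (ln a - ln mu).
  have q0 : 0 <= 2 / p by apply: divr_ge0; lra.
  have pD : p * ln D <= ln a - ln mu by lra.
  have := ler_wpM2l q0 pD.
  by rewrite (_ : 2 / p * (p * ln D) = 2 * ln D) //; field; rewrite gt_eqF.
have eD : D ^+ 2 = expR (2 * ln D).
  by rewrite -(expR_ln Dp) expRK expr2 -expRD; congr expR; ring.
rewrite -(expR_ln a0) -(expR_ln rho_gt0) eD /scaled -!expRD ler_expR expRK.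
have hal : alpha * lnT = ln rho - 2 / p * ln mu.
  by rewrite /lnT mulrC divfK // gt_eqF // alpha_gt0.
by rewrite /alpha in hal *; lra.
Qed.

(* Choosing t = min(1, (a/T)^α) in the convexity bound: h >= a/2 min(1, (a/T)^α). *)
Lemma gap_lower_growth (D a h : R) : 0 < a -> 0 <= D -> mu * powR D p <= a ->
  (forall t, 0 <= t <= 1 -> t * a - rho / 2 * t ^+ 2 * D ^+ 2 <= h) ->
  a / 2 * Num.min 1 (scaled a) <= h.
Proof.
move=> a0 D0 hg ht.
have hG := growth_scaled a0 D0 hg; have X0 := scaled_gt0 a.
have [X1|X1] := lerP 1 (scaled a).
- have := ht 1 ltac:(by rewrite ler01 lexx); rewrite expr1n.
  have : rho * D ^+ 2 <= a.
    apply: le_trans hG; rewrite -{1}(mulr1 (rho * D ^+ 2)); apply: ler_wpM2l => //.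
    by apply: mulr_ge0; [exact: ltW| exact: sqr_ge0].
  by lra.
- have := ht (scaled a) ltac:(by rewrite (ltW X0) (ltW X1)).
  have := ler_wpM2l (ltW X0) hG.
  rewrite (_ : _ * (_ * _ * _) = rho * scaled a ^+ 2 * D ^+ 2 ); last by rewrite expr2; ring.
  by lra.
Qed.

(* Below the threshold: a' <= a (1 - y) with y = β(a/T)^α/2, and
   (1 - y)^{-α} >= 1 + αy makes a'^{-α} exceed a^{-α} by at least A. *)
Lemma Psi_drop_below a a' h : eps < a' -> 0 < a -> a <= Tthr ->
  a / 2 * scaled a <= h -> a' <= a - beta * h -> Psi a' <= Psi a - 1.
Proof.
move=> ea' a0 aT hh ha.
have b0 := beta_gt0; have b1 := beta_lt1; have A0 := Acoef_gt0; have al0 := alpha_gt0.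
have a'0 : 0 < a' by apply: lt_trans ea'.
have X0 := scaled_gt0 a; have X1 := scaled_le1 a0 aT.
set y := beta * scaled a / 2.
have y0 : 0 <= y by rewrite /y; apply: divr_ge0 => //; apply: mulr_ge0; apply: ltW.
have y1 : y < 1.
  have : beta * scaled a <= 1 by nra.
  by rewrite /y; lra.
have ha2 : a' <= a * (1 - y).
  by have := ler_wpM2l (ltW b0) hh; rewrite /y; lra.
have a'T : a' <= Tthr.
  have : 0 <= a * y by nra.
  by move=> ?; apply: le_trans aT; lra.
rewrite /Psi a'T aT.
have h1 := ipow_le a'0 ha2; rewrite ipowM // in h1; last lra.
have h2 : 1 + alpha * y <= ipow (1 - y).
  rewrite /ipow; apply: le_trans (expR_ge1Dx _).
  by have := @ln_1m R y ltac:(by rewrite y0 y1); nra.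
have h3 : ipow a * (alpha * y) = Acoef by rewrite /Acoef /y -(ipow_scaled a); field.
have ipa0 : 0 < ipow a by apply: expR_gt0.
have := ler_wpM2l (ltW ipa0) h2; rewrite mulrDr mulr1 h3 => h4.
rewrite (_ : (ipow eps - ipow a) / Acoef - 1 = (ipow eps - (ipow a + Acoef)) / Acoef);
  last by field; rewrite gt_eqF.
by rewrite ler_pM2r ?invr_gt0 //; lra.
Qed.

(* Above the threshold a step reduces the gap by the factor 1 - β/2, hence
   ln a by at least β/2. *)
Lemma Psi_drop_above a a' h : eps < a' -> Tthr < a ->
  a / 2 <= h -> a' <= a - beta * h -> Psi a' <= Psi a - 1.
Proof.
move=> ea' aT hh ha.
have b0 := beta_gt0; have b1 := beta_lt1; have A0 := Acoef_gt0.
have a0 : 0 < a by apply: lt_trans Tthr_gt0 aT.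
have a'0 : 0 < a' by apply: lt_trans ea'.
have lnaT : lnT < ln a by rewrite -ln_Tthr; apply: ln_lt => //; exact: Tthr_gt0.
have ha2 : a' <= a * (1 - beta / 2) by have := ler_wpM2l (ltW b0) hh; lra.
have b2 : 0 <= 2 / beta by apply: divr_ge0; lra.
rewrite /Psi (leNgt a) aT /=.
have [a'T|a'T] := lerP a' Tthr.
- have : (ipow eps - ipow a') / Acoef <= (ipow eps - ipow Tthr) / Acoef.
    by rewrite ler_pM2r ?invr_gt0 //; have := ipow_le a'0 a'T; lra.
  have : 0 <= 2 / beta * (ln a - lnT) by apply: mulr_ge0; lra.
  by lra.
- have h1 : ln a' <= ln a - beta / 2.
    have := ln_le a'0 ha2; rewrite lnMp //; last lra.
    by have := @ln_1m R (beta / 2) ltac:(apply/andP; split; lra); lra.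
  have : 2 / beta * (ln a' - lnT) <= 2 / beta * (ln a - lnT) - 1.
    rewrite (_ : _ - 1 = 2 / beta * (ln a - beta / 2 - lnT)); last by field; rewrite gt_eqF.
    by apply: ler_wpM2l => //; lra.
  by lra.
Qed.

Lemma Psi_descent : descent_potential mu p rho beta eps Psi.
Proof.
move=> a a' D h ea' D0 hg ha ht.
have [h0 a0] := descent_data_pos beta_gt0 eps_gt0 ea' ha ht.
have hh := gap_lower_growth a0 D0 hg ht.
have [aT|aT] := lerP a Tthr.
- by apply: (Psi_drop_below ea' a0 aT _ ha); rewrite min_r // in hh; exact: scaled_le1.
- by apply: (Psi_drop_above ea' aT _ ha); rewrite min_l ?mulr1 // in hh; apply/scaled_ge1/ltW.
Qed.

Lemma Psi_above a : eps < a -> Psi eps < Psi a.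
Proof.
move=> ea.
have b0 := beta_gt0; have e0 := eps_gt0; have a0 : 0 < a by lra.
have A0 := Acoef_gt0; have T0 := Tthr_gt0.
have b2 : 0 < 2 / beta by apply: divr_gt0; lra.
rewrite /Psi; have [eT|eT] := lerP eps Tthr; last first.
  by rewrite leNgt (lt_trans eT ea) /=; have := ln_lt eps_gt0 ea; nra.
rewrite subrr mul0r; have [aT|aT] := lerP a Tthr.
  by apply: divr_gt0 => //; rewrite subr_gt0; apply: ipow_lt.
have : 0 <= (ipow eps - ipow Tthr) / Acoef.
  by apply: divr_ge0; [rewrite subr_ge0; apply: ipow_le | exact: ltW].
have : lnT < ln a by rewrite -ln_Tthr; apply: ln_lt.
by nra.
Qed.

(* The range of Ψ on [ε, a]:  Ψ(a) - Ψ(ε) + 1 <= ε^{-α}/A + max(0, (2/β) ln(a/T)).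
   When ε > T this uses e^{-αu} >= 1 - αu with u = ln(ε/T), and
   T^{-α}/A = 2/(αβ) >= 2. *)
Lemma Psi_range a : eps <= a ->
  Psi a - Psi eps + 1 <= ipow eps / Acoef + Num.max 0 (2 / beta * (ln a - lnT)).
Proof.
move=> ea.
have b0 := beta_gt0; have b1 := beta_lt1; have e0 := eps_gt0; have a0 : 0 < a by lra.
have A0 := Acoef_gt0; have T0 := Tthr_gt0; have al0 := alpha_gt0; have al1 := alpha_lt1.
have iT := ipow_Tthr.
have two : 2 <= 2 / (alpha * beta).
  have ab : 0 < alpha * beta by apply: mulr_gt0.
  by rewrite ler_pdivlMr //; nra.
have mx0 : 0 <= Num.max 0 (2 / beta * (ln a - lnT)) by rewrite le_max lexx.
have mx1 : 2 / beta * (ln a - lnT) <= Num.max 0 (2 / beta * (ln a - lnT)).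
  by rewrite le_max lexx orbT.
rewrite /Psi; have [eT|eT] := lerP eps Tthr.
- rewrite subrr mul0r subr0.
  have [aT|aT] := lerP a Tthr; rewrite mulrBl; last by lra.
  have : ipow Tthr / Acoef <= ipow a / Acoef by rewrite ler_pM2r ?invr_gt0 // ipow_le.
  by lra.
- have aT : Tthr < a by lra.
  rewrite (leNgt a Tthr) aT /=.
  set u := ln eps - lnT.
  have h1 : 1 - alpha * u <= expR (- alpha * u).
    by have := expR_ge1Dx (- alpha * u); rewrite mulNr.
  have h2 : ipow eps / Acoef = 2 / (alpha * beta) * expR (- alpha * u).
    rewrite (_ : ipow eps = ipow Tthr * expR (- alpha * u)); first by rewrite mulrAC iT.
    by rewrite /ipow -expRD ln_Tthr /u; congr expR; ring.
  have h3 : 2 / (alpha * beta) * (1 - alpha * u) = 2 / (alpha * beta) - 2 / beta * u.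
    by field; apply/andP; split; rewrite gt_eqF.
  have h4 : 2 / (alpha * beta) * (1 - alpha * u) <= 2 / (alpha * beta) * expR (- alpha * u).
    by apply: ler_wpM2l => //; apply: divr_ge0; [lra | apply: ltW; exact: mulr_gt0].
  by lra.
Qed.

Lemma N_bound_pgt2 (a : R) (n : nat) : eps <= a ->
  (n%:R : R) < Psi a - Psi eps + 1 -> (n%:R : R) <= N_bound p mu rho beta eps a.
Proof.
move=> ea hn; have e0 := eps_gt0; have a0 : 0 < a by lra.
have al0 := alpha_gt0; have p0 : 0 < p by move: p_gt2; lra.
have := Psi_range ea; have := ceil_plus_ge (2 / beta * (ln a - lnT)).
rewrite /N_bound p_gt2.
have -> : powR (rho / powR mu (2 / p)) (1 / (1 - 2 / p)) = Tthr.
  rewrite powR_exp; last by apply: divr_gt0 => //; apply: powR_gt0.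
  rewrite /Tthr /lnT powR_exp // ln_div ?posrE ?expR_gt0 // expRK -/alpha.
  by congr expR; field; rewrite !gt_eqF.
have -> : 2 * rho / ((1 - 2 / p) * beta * powR mu (2 / p) * powR eps (1 - 2 / p))
   = ipow eps / Acoef.
  rewrite /Acoef /ipow /Tthr expRK /lnT -/alpha !powR_exp //.
  have -> : - alpha * ((ln rho - 2 / p * ln mu) / alpha) = - ln rho + 2 / p * ln mu.
    by field; rewrite !gt_eqF.
  rewrite expRD expRN expR_ln // mulNr expRN -/alpha.
  have := expR_gt0 (2 / p * ln mu); have := expR_gt0 (alpha * ln eps).
  by move=> ? ?; field; rewrite !gt_eqF.
have -> : 2 * ln (a / Tthr) / beta = 2 / beta * (ln a - lnT).
  rewrite ln_div ?posrE ?Tthr_gt0 // ln_Tthr; have := beta_gt0.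
  by move=> ?; field; rewrite gt_eqF.
by lra.
Qed.

End HolderPotential.

(* The potential for quadratic growth (p = 2): with m = min(μ/ρ, 1), each
   descent step multiplies the gap by at most 1 - βm/2, so
   Ψ₂(a) = (2/(βm)) ln a drops by at least one. *)
Section QuadraticPotential.
Variables (R : realType) (mu rho beta eps : R).
Hypotheses (mu_gt0 : 0 < mu) (rho_gt0 : 0 < rho) (beta_gt0 : 0 < beta)
  (beta_lt1 : beta < 1) (eps_gt0 : 0 < eps).

Definition mq := Num.min (mu / rho) 1.
Definition Psi2 (a : R) := 2 / (beta * mq) * ln a.

Lemma mq_gt0 : 0 < mq.
Proof. by rewrite /mq lt_min ltr01 andbT divr_gt0. Qed.

Lemma mq_le1 : mq <= 1.
Proof. by rewrite /mq ge_min lexx orbT. Qed.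

Lemma mq_le : mq * rho <= mu.
Proof. by rewrite -ler_pdivlMr // /mq ge_min lexx. Qed.

(* Taking t = m in the convexity bound and using ρ m D² <= μ D² <= a gives
   h >= m a/2, so a' <= a (1 - βm/2). *)
Lemma Psi2_descent : descent_potential mu 2 rho beta eps Psi2.
Proof.
move=> a a' D h ea' D0 hg ha ht.
have [h0 a0] := descent_data_pos beta_gt0 eps_gt0 ea' ha ht.
have b0 := beta_gt0; have b1 := beta_lt1; have e0 := eps_gt0.
have mg := mq_gt0; have ml := mq_le1; have mr := mq_le.
have a'0 : 0 < a' by lra.
rewrite (@powR_mulrn R D 2) // in hg.
have hD : rho * mq * D ^+ 2 <= a.
  have : mq * rho * D ^+ 2 <= mu * D ^+ 2 by apply: ler_wpM2r => //; exact: sqr_ge0.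
  by rewrite (mulrC rho); lra.
have hh : mq * a / 2 <= h.
  have := ht mq ltac:(by rewrite (ltW mg) ml).
  have := ler_wpM2l (ltW mg) hD.
  rewrite (_ : rho / 2 * mq ^+ 2 * D ^+ 2 = mq * (rho * mq * D ^+ 2) / 2); last first.
    by rewrite expr2; field.
  by lra.
have ha' : a' <= a * (1 - beta * mq / 2).
  by have := ler_wpM2l (ltW b0) hh; lra.
have bm : 0 < beta * mq by apply: mulr_gt0.
have bm1 : beta * mq < 1 by nra.
have lna' : ln a' <= ln a - beta * mq / 2.
  have := ln_le a'0 ha'; rewrite lnMp //; last lra.
  by have := @ln_1m R (beta * mq / 2) ltac:(apply/andP; split; lra); lra.
rewrite /Psi2 (_ : _ * ln a - 1 = 2 / (beta * mq) * (ln a - beta * mq / 2)).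
  by apply: ler_wpM2l => //; apply: divr_ge0; lra.
by field; rewrite ?gt_eqF // mulr_gt0.
Qed.

Lemma Psi2_above a : eps < a -> Psi2 eps < Psi2 a.
Proof.
move=> ea; have mg := mq_gt0; have b0 := beta_gt0.
rewrite /Psi2 ltr_pM2l; last by apply: divr_gt0; [lra | exact: mulr_gt0].
exact: ln_lt.
Qed.

Lemma N_bound_p2 (a : R) (n : nat) : eps <= a ->
  (n%:R : R) < Psi2 a - Psi2 eps + 1 -> (n%:R : R) <= N_bound 2 mu rho beta eps a.
Proof.
move=> ea hn; have e0 := eps_gt0.
rewrite /N_bound ltxx; apply: nat_le_ceil.
rewrite ln_div ?posrE; [| lra | lra].
by move: hn; rewrite /Psi2 /mq -mulrBr mulrAC.
Qed.

End QuadraticPotential.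

Unset Implicit Arguments. Set Strict Implicit.

(* After checking L >= 0 (f is not constant along
   the run), the abstract bound [pbm_complexity] is instantiated with the
   potential Ψ for p > 2 and Ψ₂ for p = 2; the extra +1 in the null-step bound
   for p > 2 is slack. *)
Theorem theorem4 (R : realType) (d : nat) (f : 'rV[R]_d -> R) (L fstar mu p : R)
    (g : 'rV[R]_d -> 'rV[R]_d) (beta rho eps : R)
    (x z : nat -> 'rV[R]_d) (fmod : nat -> 'rV[R]_d -> R) :
  convex_fun f ->
  smooth_with f L ->
  is_min_value f fstar ->
  0 < mu -> 2 <= p ->
  (forall y, mu * powR (dist y [set w | f w = fstar]) p <= f y - fstar) ->
  (forall y, is_subgradient f y (g y)) ->
  0 < beta < 1 -> 0 < rho ->
  PBM_run f g beta rho x z fmod ->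
  0 < eps -> eps <= f (x 0%N) - fstar ->
  exists K : nat,
    [/\ f (x K) - fstar <= eps,
        (n_descent beta f x z fmod K)%:R
          <= N_bound p mu rho beta eps (f (x 0%N) - fstar) &
        (n_null beta f x z fmod K)%:R
          <= null_bound p L mu rho beta eps (f (x 0%N) - fstar)].
Proof.
move=> f_conv f_smooth fstar_min mu_gt0 p_ge2 growth g_sub /andP [b0 b1] r0 run e0 eD.
have L0 : 0 <= L.
  apply: (smooth_const_ge0 g_sub (c := x 0) f_smooth); apply/eqP => g0.
  case: fstar_min => _ [w hw].
  by have := zero_subgradient_min (g_sub (x 0)) g0 w; lra.
have C0 := null_ratio_ge0 b1 r0 L0.
have [p2|p2] := ltrP 2 p.
- have [K [hK hD hN]] := pbm_complexity f_conv f_smooth g_sub b0 b1 r0 L0 run fstar_min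
    growth e0 (Psi_descent mu_gt0 r0 b0 b1 p2 e0) (Psi_above mu rho b0 p2 e0) eD
    (fun n => N_bound_pgt2 mu_gt0 r0 b0 b1 p2 e0 (n := n) eD).
  exists K; split => //; rewrite /null_bound p2.
  by apply: le_trans hN _; apply: ler_wpM2l => //; lra.
- have p2' : p = 2 by apply/eqP; rewrite eq_le p2 p_ge2.
  subst p.
  have [K [hK hD hN]] := pbm_complexity f_conv f_smooth g_sub b0 b1 r0 L0 run fstar_min
    growth e0 (Psi2_descent mu_gt0 r0 b0 b1 e0) (Psi2_above mu_gt0 r0 b0 e0) eD
    (fun n => N_bound_p2 (mu := mu) (rho := rho) (beta := beta) e0 (n := n) eD).
  by exists K; rewrite /null_bound ltxx.
Qed.
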